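(* Let $d\ge3$, let $\mathcal{H}_A=\mathcal{H}_B=\mathbb{C}^d$ with fixed orthonormal bases, and $\mathcal{H}=\mathcal{H}_A\otimes\mathcal{H}_B$. None of the Werner states $\rho_W(t)=1-tF$ with $t\in(1/d,1/2]$ is $2$-distillable if and only if $$\|X\otimes U+Y\otimes V\|^2-\tfrac12\|X^TU+Y^TV\|^2-\tfrac12\|UX^T+VY^T\|^2+\tfrac14|\operatorname{tr}(X^TU+Y^TV)|^2\ge0$$ for all $X,Y,U,V\in M_d(\mathbb{C})$.
   Context: The flip operator is $F=\sum_{i,j}|i,j\rangle\langle j,i|$ on $\mathcal{H}$; its partial transpose is $dP$ with $P=\frac1d\sum_{i,j}|i,i\rangle\langle j,j|$, so the partial transpose of $\rho_W(t)$ is $1-tdP$. A bipartite state $\rho$ on $\mathcal{H}$ is called $k$-distillable if there exists a (non-normalized) vector $|\psi\rangle\in\mathcal{H}^{\otimes k}$, regarded as a bipartite vector in $\mathcal{H}_A^{\otimes k}\otimes\mathcal{H}_B^{\otimes k}$, of Schmidt rank at most two such that $\langle\psi|\sigma^{\otimes k}|\psi\rangle<0$, where $\sigma=1\otimes T(\rho)$ is the partial transpose of $\rho$. $\|Z\|^2=\operatorname{tr}(Z^\dagger Z)$ is the Frobenius norm, and $A\otimes B=[a_{ij}B]$ for $A=[a_{ij}]$. *)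

From HB Require Import structures.
From mathcomp Require Import all_boot all_order all_algebra.
From mathcomp Require Import reals.
From mathcomp Require Import complex mxtens.

Set Implicit Arguments.
Unset Strict Implicit.
Unset Printing Implicit Defensive.

Import Order.TTheory GRing.Theory Num.Theory.
Local Open Scope ring_scope.
Local Open Scope complex_scope.

Section QuantumDefs.
Variable R : realType.
Local Notation C := (R[i]).

(* H = H_A (x) H_B = C^d (x) C^d, basis |i,j> = e_i (x) e_j, stored at index
   mxtens_index (i, j) = i*d + j  (Kronecker convention A (x) B = [a_ij B]). *)

Definition adjmx {m n} (Z : 'M[C]_(m, n)) : 'M[C]_(n, m) := (map_mx conjc Z)^T.

Definition fnorm2 {n} (Z : 'M[C]_n) : C := \tr (adjmx Z *m Z).

Definition flip (d : nat) : 'M[C]_(d * d) :=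
  \matrix_(p, q) (if ((mxtens_unindex p).1 == (mxtens_unindex q).2)
                    && ((mxtens_unindex p).2 == (mxtens_unindex q).1)
                  then 1 else 0).

(* Werner state rho_W(t) = 1 - t F  (non-normalized) *)
Definition werner (d : nat) (t : R) : 'M[C]_(d * d) := 1%:M - t%:C *: flip d.

Definition ptrans (d : nat) (rho : 'M[C]_(d * d)) : 'M[C]_(d * d) :=
  \matrix_(p, q) rho (mxtens_index ((mxtens_unindex p).1, (mxtens_unindex q).2))
                     (mxtens_index ((mxtens_unindex q).1, (mxtens_unindex p).2)).

(* A vector psi in H^{(x)2} = (H_A (x) H_B) (x) (H_A (x) H_B), with coordinates
   psi_{(a1,b1),(a2,b2)}, regarded as a bipartite vector in
   (H_A (x) H_A) (x) (H_B (x) H_B): its coefficient matrix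
   M_{(a1,a2),(b1,b2)} = psi_{(a1,b1),(a2,b2)}. *)
Definition bipartite_coef (d : nat) (psi : 'cV[C]_((d * d) * (d * d)))
  : 'M[C]_(d * d, d * d) :=
  \matrix_(a, b)
    psi (mxtens_index
           (mxtens_index ((mxtens_unindex a).1, (mxtens_unindex b).1),
            mxtens_index ((mxtens_unindex a).2, (mxtens_unindex b).2))) 0.

Definition schmidt_rank2 (d : nat) (psi : 'cV[C]_((d * d) * (d * d))) : nat :=
  \rank (bipartite_coef psi).

Definition two_distillable (d : nat) (rho : 'M[C]_(d * d)) : Prop :=
  exists psi : 'cV[C]_((d * d) * (d * d)),
    (schmidt_rank2 psi <= 2)%N /\
    (adjmx psi *m (ptrans rho *t ptrans rho) *m psi) 0 0 < 0.

End QuantumDefs.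

(* Partial transposition turns [1 - t F] into [1 - t w w^T], with [w = sum_i |i,i>]. The
   vectors of Schmidt rank at most two are exactly the [vec (X (x) U + Y (x) V)], and on them
   the expectation of [sigma (x) sigma] is [|P|^2 - t (|M|^2 + |N|^2) + t^2 |tr M|^2] with
   [P = X (x) U + Y (x) V], [M = X^T U + Y^T V], [N = U X^T + V Y^T]; at [t = 1/2] this is the
   form of the theorem. For [t <= 1/2] it is a nonnegative combination of its value at [1/2]
   and of [2 |P|^2 - |tr M|^2]. The latter is nonnegative because [tr M] is the trace of the
   rank-two realignment [vec X (vec U)^T + vec Y (vec V)^T] of [P], which has the same norm,
   and [|tr Q|^2 <= rank Q |Q|^2] (here by Gram-Schmidt and Cauchy-Schwarz). *)

From HB Require Import structures.
From mathcomp Require Import all_boot all_order all_algebra.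
From mathcomp Require Import reals.
From mathcomp Require Import complex mxtens.
From mathcomp Require Import ring lra.
Import Order.TTheory GRing.Theory Num.Theory.
Local Open Scope ring_scope.
Set Implicit Arguments.
Unset Strict Implicit.
Unset Printing Implicit Defensive.

Lemma sum_mxtens_index (V : nmodType) m n (F : 'I_(m * n) -> V) :
  \sum_k F k = \sum_i \sum_j F (mxtens_index (i, j)).
Proof.
rewrite pair_big (reindex (@mxtens_index m n)) /=; last first.
  by exists (@mxtens_unindex m n) => k _; rewrite (mxtens_indexK, mxtens_unindexK).
by apply: eq_bigr => -[i j].
Qed.

Section Vectorization.
Variable C : comPzRingType.

Definition vecmx m n (P : 'M[C]_(m, n)) : 'cV[C]_(m * n) :=
  \col_k P (mxtens_unindex k).1 (mxtens_unindex k).2.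

Definition unvecmx m n (v : 'cV[C]_(m * n)) : 'M[C]_(m, n) :=
  \matrix_(i, j) v (mxtens_index (i, j)) 0.

Lemma vecmxE m n (P : 'M[C]_(m, n)) i j : vecmx P (mxtens_index (i, j)) 0 = P i j.
Proof. by rewrite mxE mxtens_indexK. Qed.

Lemma vecmxK m n : cancel (@vecmx m n) (@unvecmx m n).
Proof. by move=> P; apply/matrixP => i j; rewrite mxE vecmxE. Qed.

Lemma unvecmxK m n : cancel (@unvecmx m n) (@vecmx m n).
Proof.
move=> v; apply/matrixP => k l; rewrite ord1.
by case: (mxtens_indexP k) => i j; rewrite vecmxE mxE.
Qed.

Lemma vecmxD m n (P Q : 'M[C]_(m, n)) : vecmx (P + Q) = vecmx P + vecmx Q.
Proof. by apply/matrixP => k l; rewrite !mxE. Qed.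

Lemma trmx_vecmx_mul m n (P Q : 'M[C]_(m, n)) :
  (vecmx P)^T *m vecmx Q = (\tr (P^T *m Q))%:M.
Proof.
apply/matrixP => i j; rewrite !ord1 !mxE /= mulr1n sum_mxtens_index exchange_big /=.
by apply: eq_bigr => b _; rewrite !mxE; apply: eq_bigr => a _; rewrite !mxE !mxtens_indexK.
Qed.

Lemma tens_mul_vecmx m n p q (A : 'M[C]_(m, p)) (B : 'M[C]_(n, q)) (P : 'M[C]_(p, q)) :
  (A *t B) *m vecmx P = vecmx (A *m P *m B^T).
Proof.
apply/matrixP => k l; rewrite ord1; case: (mxtens_indexP k) => i j.
rewrite vecmxE mxE sum_mxtens_index !mxE.
under [RHS]eq_bigr => b _ do rewrite !mxE mulr_suml.
rewrite exchange_big /=; apply: eq_bigr => b _; apply: eq_bigr => a _.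
by rewrite tensmxE vecmxE; ring.
Qed.

End Vectorization.

Lemma mxrank_le2_decomp (F : fieldType) m k (A : 'M[F]_(m, k)) : (\rank A <= 2)%N ->
  exists (x y : 'cV[F]_m) (u v : 'rV[F]_k), A = x *m u + y *m v.
Proof.
rewrite -{2}(mulmx_base A); move: (col_base A) (row_base A).
case: (\rank A) => [|[|[|r]]] // Cb Db _.
- by exists 0, 0, 0, 0; rewrite (thinmx0 Cb) !mul0mx addr0.
- by exists Cb, 0, Db, 0; rewrite mul0mx addr0.
- exists (col 0 Cb), (col 1 Cb), (row 0 Db), (row 1 Db).
  apply/matrixP => i j; rewrite !mxE !big_ord_recl !big_ord0 !addr0 !mxE.
  by congr (_ * _ + Cb i _ * Db _ j); apply: val_inj.
Qed.

Section RankTwoTraceBound.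
Variables (C : numClosedFieldType) (I : finType).
Implicit Types f g x y u v : I -> C.

Definition dotc f g : C := \sum_k (f k)^* * g k.
Definition dotb f g : C := \sum_k f k * g k.
Local Notation norm2 f := (dotc f f).

Lemma norm2_ge0 f : 0 <= norm2 f.
Proof. by apply: sumr_ge0 => k _; rewrite mulrC mul_conjC_ge0. Qed.

Lemma norm2_eq0 f : norm2 f = 0 -> forall k, f k = 0.
Proof.
move=> /eqP; rewrite psumr_eq0 => [/allP f0 k|k _]; last by rewrite mulrC mul_conjC_ge0.
have /f0 : k \in index_enum I by rewrite mem_index_enum.
by rewrite /= mulf_eq0 conjC_eq0 orbb => /eqP.
Qed.

Lemma conj_dotc f g : (dotc f g)^* = dotc g f.
Proof. by rewrite rmorph_sum; apply: eq_bigr => k _; rewrite rmorphM /= conjCK mulrC. Qed.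

Lemma dotb_cauchy_schwarz f g : dotb f g * (dotb f g)^* <= norm2 f * norm2 g.
Proof.
set S := norm2 f; set z := dotb f g.
have [S0|SP] := eqVneq S 0.
  have -> : z = 0 by rewrite /z /dotb big1 // => k _; rewrite (norm2_eq0 S0) mul0r.
  by rewrite S0 !mul0r.
have S_gt0 : 0 < S by rewrite lt_def SP norm2_ge0.
(* [S g - z f^*] is [S] times the component of [g] orthogonal to [f^*] *)
have proj : norm2 (fun k => S * g k - z * (f k)^*) = S * (S * norm2 g - z * z^*).
  have SJ : S^* = S by apply: conj_dotc.
  transitivity (\sum_k (S * S * ((g k)^* * g k)
      - S * z * (f k * g k)^* - S * z^* * (f k * g k) + z * z^* * ((f k)^* * f k))).
    by apply: eq_bigr => k _; rewrite rmorphB !rmorphM /= SJ conjCK; ring.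
  rewrite !big_split /= !sumrN -!mulr_sumr -rmorph_sum /=.
  by rewrite -/(dotc g g) -/(dotc f f) -/(dotb f g) -/S -/z; ring.
have : 0 <= S * (S * norm2 g - z * z^*) by rewrite -proj norm2_ge0.
by rewrite pmulr_rge0 // subr_ge0.
Qed.

Lemma sqr_normD_le (a b : C) : `|a + b| ^+ 2 <= 2 * `|a| ^+ 2 + 2 * `|b| ^+ 2.
Proof.
rewrite -subr_ge0 !normCK.
have -> : 2 * (a * a^*) + 2 * (b * b^*) - (a + b) * (a + b)^* = (a - b) * (a - b)^*.
  by rewrite !rmorphD rmorphN /=; ring.
exact: mul_conjC_ge0.
Qed.

Definition norm2_tens2 x u y v : C := \sum_k \sum_l `|x k * u l + y k * v l| ^+ 2.

Lemma norm2_tens2_orthogonal x u y v : dotc x y = 0 ->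
  norm2_tens2 x u y v = norm2 x * norm2 u + norm2 y * norm2 v.
Proof.
move=> xy0; have yx0 : dotc y x = 0 by rewrite -conj_dotc xy0 conjC0.
transitivity (\sum_k \sum_l ((x k)^* * x k * ((u l)^* * u l)
   + (y k)^* * y k * ((v l)^* * v l) + (x k)^* * y k * ((u l)^* * v l)
   + (y k)^* * x k * ((v l)^* * u l))).
  by apply: eq_bigr => k _; apply: eq_bigr => l _; rewrite normCKC rmorphD !rmorphM /=; ring.
under eq_bigr => k _ do rewrite !big_split /= -!mulr_sumr.
by rewrite !big_split /= -!mulr_suml -!/(dotc _ _) xy0 yx0 !mul0r !addr0.
Qed.

Lemma sqr_norm_dotb2_le x u y v :
  `|dotb x u + dotb y v| ^+ 2 <= 2 * norm2_tens2 x u y v.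
Proof.
(* Gram-Schmidt: replacing [y] by [y - lam x] and [u] by [u + lam v] changes neither side *)
wlog xy0 : y u / dotc x y = 0.
  move=> orth; set lam := dotc x y / norm2 x.
  have [/norm2_eq0 x0|xn0] := eqVneq (norm2 x) 0.
    by apply: orth; rewrite /dotc big1 // => k _; rewrite x0 conjC0 mul0r.
  pose y' k := y k - lam * x k; pose u' l := u l + lam * v l.
  have -> : dotb x u + dotb y v = dotb x u' + dotb y' v.
    by rewrite /dotb -!big_split /=; apply: eq_bigr => k _; rewrite /u' /y'; ring.
  have -> : norm2_tens2 x u y v = norm2_tens2 x u' y' v.
    by apply: eq_bigr => k _; apply: eq_bigr => l _; rewrite /u' /y'; congr (`|_| ^+ 2); ring.
  apply: orth; rewrite /dotc /y'; transitivity (dotc x y - lam * norm2 x).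
    by rewrite /dotc mulr_sumr -sumrB; apply: eq_bigr => k _; ring.
  by rewrite /lam mulfVK // subrr.
apply: le_trans (sqr_normD_le _ _) _.
rewrite norm2_tens2_orthogonal // mulrDr !normCK.
by rewrite lerD // ler_pM2l ?ltr0n // dotb_cauchy_schwarz.
Qed.

End RankTwoTraceBound.

Section ComplexMatrices.
Variable R : realType.
Local Open Scope complex_scope.
Local Notation C := R[i].

Lemma adjmxM m n p (A : 'M[C]_(m, n)) (B : 'M[C]_(n, p)) :
  adjmx (A *m B) = adjmx B *m adjmx A.
Proof. by rewrite /adjmx map_mxM trmx_mul. Qed.

Lemma adjmx_vecmx m n (P : 'M[C]_(m, n)) : adjmx (vecmx P) = (vecmx (map_mx conjc P))^T.
Proof. by congr trmx; apply/matrixP => k l; rewrite !mxE. Qed.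

Lemma adjmx_vecmx_mul m n (P Q : 'M[C]_(m, n)) :
  adjmx (vecmx P) *m vecmx Q = (\tr (adjmx P *m Q))%:M.
Proof. by rewrite adjmx_vecmx trmx_vecmx_mul. Qed.

Lemma fnorm2E n (Z : 'M[C]_n) : fnorm2 Z = \sum_i \sum_j `|Z i j| ^+ 2.
Proof.
rewrite /fnorm2 /mxtrace exchange_big /=; apply: eq_bigr => j _.
by rewrite mxE; apply: eq_bigr => i _; rewrite !mxE sqr_normc mulrC.
Qed.

Lemma fnorm2_ge0 n (Z : 'M[C]_n) : 0 <= fnorm2 Z.
Proof. by rewrite fnorm2E; do 2![apply: sumr_ge0 => ? _]; rewrite exprn_ge0. Qed.

Lemma fnorm2_real n (Z : 'M[C]_n) : fnorm2 Z \is Num.real.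
Proof. exact/ger0_real/fnorm2_ge0. Qed.

Lemma mxtrace_adj_trmx m n (Z : 'M[C]_(m, n)) :
  \tr (adjmx Z^T *m Z^T) = \tr (adjmx Z *m Z).
Proof.
by rewrite /adjmx map_trmx trmxK -[in LHS]mxtrace_tr trmx_mul trmxK mxtrace_mulC.
Qed.

Lemma fnorm2_tr n (Z : 'M[C]_n) : fnorm2 Z^T = fnorm2 Z.
Proof. exact: mxtrace_adj_trmx. Qed.

Lemma mxtrace_adj_vecmx m n (v : 'cV[C]_(m * n)) :
  \tr (adjmx v *m v) = \tr (adjmx (unvecmx v) *m unvecmx v).
Proof. by rewrite -{1 2}(unvecmxK v) adjmx_vecmx_mul mxtrace_scalar. Qed.

Lemma mxtrace_adj_mx1 (s : 'M[C]_1) : \tr (adjmx s *m s) = `|s 0 0| ^+ 2.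
Proof. by rewrite /mxtrace big_ord1 !mxE big_ord1 !mxE sqr_normc mulrC. Qed.

Lemma mxtrace_rank2_le m (x y : 'cV[C]_m) (u v : 'rV[C]_m) :
  `|\tr (x *m u + y *m v)| ^+ 2 <= 2 * fnorm2 (x *m u + y *m v).
Proof.
pose col_of (w : 'cV[C]_m) k := w k 0; pose row_of (w : 'rV[C]_m) k := w 0 k.
have -> : \tr (x *m u + y *m v)
    = dotb (col_of x) (row_of u) + dotb (col_of y) (row_of v).
  by rewrite /mxtrace -big_split; apply: eq_bigr => k _; rewrite !mxE !big_ord1.
have -> : fnorm2 (x *m u + y *m v)
    = norm2_tens2 (col_of x) (row_of u) (col_of y) (row_of v).
  rewrite fnorm2E; apply: eq_bigr => i _; apply: eq_bigr => j _.
  by rewrite !mxE !big_ord1.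
exact: sqr_norm_dotb2_le.
Qed.

Definition expectation k (psi : 'cV[C]_k) (M : 'M[C]_k) : C := (adjmx psi *m M *m psi) 0 0.

Lemma expectationD k (psi : 'cV[C]_k) M1 M2 :
  expectation psi (M1 + M2) = expectation psi M1 + expectation psi M2.
Proof. by rewrite /expectation mulmxDr mulmxDl mxE. Qed.

Lemma expectationN k (psi : 'cV[C]_k) M : expectation psi (- M) = - expectation psi M.
Proof. by rewrite /expectation mulmxN mulNmx mxE. Qed.

Lemma expectationZ k (psi : 'cV[C]_k) c M : expectation psi (c *: M) = c * expectation psi M.
Proof. by rewrite /expectation -scalemxAr -scalemxAl mxE. Qed.

Lemma expectation_vecmx_tens p q (P : 'M[C]_(p, q)) A B :
  expectation (vecmx P) (A *t B) = \tr (adjmx P *m (A *m P *m B^T)).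
Proof.
by rewrite /expectation -mulmxA tens_mul_vecmx adjmx_vecmx_mul mxE eqxx mulr1n.
Qed.

End ComplexMatrices.

Section Werner.
Variable R : realType.
Local Open Scope complex_scope.
Local Notation C := R[i].
Variable d : nat.
Local Notation n := (d * d)%N.
Implicit Types (t : R) (P : 'M[C]_n) (X Y U V : 'M[C]_d).

Definition max_entangled : 'cV[C]_n := vecmx 1%:M.
Local Notation omega := max_entangled.

Lemma map_conj_max_entangled : map_mx conjc omega = omega.
Proof. by apply/matrixP => k l; rewrite !mxE conjc_nat. Qed.

Lemma adjmx_max_entangled : adjmx omega = omega^T.
Proof. by rewrite /adjmx map_conj_max_entangled. Qed.

Lemma adjmx_trmx_max_entangled : adjmx omega^T = omega.
Proof. by rewrite /adjmx map_trmx trmxK map_conj_max_entangled. Qed.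

Lemma ptrans_werner t : ptrans (werner d t) = 1%:M - t%:C *: (omega *m omega^T).
Proof.
apply/matrixP => p q; rewrite !mxE big_ord1 !mxE.
case: (mxtens_indexP p) => a b; case: (mxtens_indexP q) => c e.
rewrite !mxtens_indexK /= !(inj_eq (can_inj (@mxtens_indexK _ _))) !xpair_eqE.
rewrite [e == b]eq_sym [e == c]eq_sym.
by case: (a == c); case: (b == e); case: (a == b); case: (c == e);
  rewrite /= ?(mul1r, mul0r, mulr1, mulr0).
Qed.

Lemma expectation_werner t P :
  expectation (vecmx P) (ptrans (werner d t) *t ptrans (werner d t)) =
  fnorm2 P - t%:C * (fnorm2 (unvecmx (P^T *m omega)) + fnorm2 (unvecmx (P *m omega)))
  + t%:C ^+ 2 * `|(omega^T *m P *m omega) 0 0| ^+ 2.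
Proof.
rewrite ptrans_werner; set K := omega *m omega^T.
have -> : (1%:M - t%:C *: K) *t (1%:M - t%:C *: K) =
    1%:M *t 1%:M - t%:C *: (K *t 1%:M) - t%:C *: (1%:M *t K) + t%:C ^+ 2 *: (K *t K).
  by apply/matrixP => i j; rewrite !mxE; ring.
rewrite !(expectationD, expectationN, expectationZ) !expectation_vecmx_tens.
have trK : K^T = K by rewrite /K trmx_mul trmxK.
have E11 : \tr (adjmx P *m (1%:M *m P *m 1%:M^T)) = fnorm2 P.
  by rewrite trmx1 mul1mx mulmx1.
have EK1 : \tr (adjmx P *m (K *m P *m 1%:M^T)) = fnorm2 (unvecmx (P^T *m omega)).
  rewrite /fnorm2 -mxtrace_adj_vecmx -mxtrace_adj_trmx trmx_mul trmxK adjmxM.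
  by rewrite adjmx_trmx_max_entangled trmx1 mulmx1 /K !mulmxA.
have E1K : \tr (adjmx P *m (1%:M *m P *m K^T)) = fnorm2 (unvecmx (P *m omega)).
  rewrite /fnorm2 -mxtrace_adj_vecmx adjmxM adjmx_max_entangled trK mul1mx /K.
  by rewrite !mulmxA mxtrace_mulC !mulmxA.
have EKK : \tr (adjmx P *m (K *m P *m K^T)) = `|(omega^T *m P *m omega) 0 0| ^+ 2.
  rewrite -mxtrace_adj_mx1 !adjmxM adjmx_max_entangled adjmx_trmx_max_entangled trK /K.
  by rewrite !mulmxA mxtrace_mulC !mulmxA.
by rewrite E11 EK1 E1K EKK; ring.
Qed.

Lemma trmx_tens2_mul_max_entangled X Y U V :
  (X *t U + Y *t V)^T *m omega = vecmx (X^T *m U + Y^T *m V).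
Proof.
by rewrite linearD /= !trmx_tens mulmxDl !tens_mul_vecmx !mulmx1 !trmxK vecmxD.
Qed.

Lemma tens2_mul_max_entangled X Y U V :
  (X *t U + Y *t V) *m omega = vecmx (X *m U^T + Y *m V^T).
Proof. by rewrite mulmxDl !tens_mul_vecmx !mulmx1 vecmxD. Qed.

Lemma max_entangled_sandwich_tens2 X Y U V :
  (omega^T *m (X *t U + Y *t V) *m omega) 0 0 = \tr (X^T *m U + Y^T *m V).
Proof.
rewrite -[omega^T *m _]trmxK trmx_mul trmxK trmx_tens2_mul_max_entangled.
by rewrite trmx_vecmx_mul mulmx1 mxtrace_tr mxE eqxx mulr1n.
Qed.

Definition werner_form t X Y U V : C :=
  fnorm2 (X *t U + Y *t V)
  - t%:C * (fnorm2 (X^T *m U + Y^T *m V) + fnorm2 (U *m X^T + V *m Y^T))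
  + t%:C ^+ 2 * `|\tr (X^T *m U + Y^T *m V)| ^+ 2.

Lemma expectation_werner_tens2 t X Y U V :
  expectation (vecmx (X *t U + Y *t V)) (ptrans (werner d t) *t ptrans (werner d t))
  = werner_form t X Y U V.
Proof.
rewrite expectation_werner trmx_tens2_mul_max_entangled tens2_mul_max_entangled.
rewrite max_entangled_sandwich_tens2 !vecmxK -[X *m _ + _]trmxK fnorm2_tr.
by rewrite linearD /= !trmx_mul !trmxK.
Qed.


Lemma bipartite_coefE (psi : 'cV[C]_(n * n)) a1 a2 b1 b2 :
  bipartite_coef psi (mxtens_index (a1, a2)) (mxtens_index (b1, b2))
  = psi (mxtens_index (mxtens_index (a1, b1), mxtens_index (a2, b2))) 0.
Proof. by rewrite mxE !mxtens_indexK. Qed.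

Lemma bipartite_coef_inj : injective (@bipartite_coef R d).
Proof.
move=> psi phi E; apply/matrixP => k l; rewrite ord1.
case: (mxtens_indexP k) => p q; case: (mxtens_indexP p) => a1 b1.
case: (mxtens_indexP q) => a2 b2.
by rewrite -!bipartite_coefE E.
Qed.

Lemma bipartite_coef_tens2 X Y U V :
  bipartite_coef (vecmx (X *t U + Y *t V))
  = vecmx X *m (vecmx U)^T + vecmx Y *m (vecmx V)^T.
Proof.
apply/matrixP => a b.
case: (mxtens_indexP a) => a1 a2; case: (mxtens_indexP b) => b1 b2.
by rewrite bipartite_coefE !mxE !big_ord1 !mxE !mxtens_indexK.
Qed.

Lemma fnorm2_bipartite_coef (psi : 'cV[C]_(n * n)) :
  fnorm2 (bipartite_coef psi) = fnorm2 (unvecmx psi).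
Proof.
rewrite !fnorm2E !sum_mxtens_index; apply: eq_bigr => a1 _.
under eq_bigr => a2 _ do rewrite sum_mxtens_index.
under [RHS]eq_bigr => b1 _ do rewrite sum_mxtens_index.
rewrite exchange_big /=; apply: eq_bigr => b1 _; apply: eq_bigr => a2 _.
by apply: eq_bigr => b2 _; rewrite bipartite_coefE mxE.
Qed.


Lemma schmidt_rank2_tens2_le2 X Y U V : (schmidt_rank2 (vecmx (X *t U + Y *t V)) <= 2)%N.
Proof.
rewrite /schmidt_rank2 bipartite_coef_tens2.
apply: leq_trans (mxrank_add _ _) _.
by apply: (@leq_add _ _ 1 1); apply: leq_trans (mxrankM_maxl _ _) _; apply: rank_leq_col.
Qed.

Lemma schmidt_rank2_le2_decomp (psi : 'cV[C]_(n * n)) : (schmidt_rank2 psi <= 2)%N ->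
  exists X Y U V, psi = vecmx (X *t U + Y *t V).
Proof.
move=> /mxrank_le2_decomp [x [y [u [v E]]]].
exists (unvecmx x), (unvecmx y), (unvecmx u^T), (unvecmx v^T).
by apply: bipartite_coef_inj; rewrite bipartite_coef_tens2 !unvecmxK !trmxK.
Qed.

Lemma two_distillable_werner t :
  two_distillable (werner d t) <-> exists X Y U V, werner_form t X Y U V < 0.
Proof.
split=> [[psi [/schmidt_rank2_le2_decomp [X [Y [U [V ->]]]]]] | [X [Y [U [V neg]]]]].
  by rewrite -/(expectation _ _) expectation_werner_tens2 => neg; exists X, Y, U, V.
exists (vecmx (X *t U + Y *t V)); split; first exact: schmidt_rank2_tens2_le2.
by rewrite -/(expectation _ _) expectation_werner_tens2.
Qed.


Lemma sqr_norm_mxtrace_le_tens2 X Y U V :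
  `|\tr (X^T *m U + Y^T *m V)| ^+ 2 <= 2 * fnorm2 (X *t U + Y *t V).
Proof.
rewrite -[X *t U + _]vecmxK -fnorm2_bipartite_coef bipartite_coef_tens2.
have trE (A B : 'M[C]_d) : \tr (A^T *m B) = \tr (vecmx A *m (vecmx B)^T).
  by rewrite [RHS]mxtrace_mulC trmx_vecmx_mul mxtrace_scalar -mxtrace_tr trmx_mul trmxK.
by rewrite mxtraceD !trE -mxtraceD mxtrace_rank2_le.
Qed.

Lemma werner_form_real t X Y U V : werner_form t X Y U V \is Num.real.
Proof.
have t_real : t%:C \is Num.real by apply/complex_realP; exists t.
by rewrite !(rpredD, rpredN, rpredM, rpredX) ?fnorm2_real ?normr_real.
Qed.

Lemma werner_form_half X Y U V :
  werner_form 2^-1 X Y U V =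
  fnorm2 (X *t U + Y *t V) - 2^-1 * fnorm2 (X^T *m U + Y^T *m V)
  - 2^-1 * fnorm2 (U *m X^T + V *m Y^T) + 4^-1 * `|\tr (X^T *m U + Y^T *m V)| ^+ 2.
Proof. by rewrite /werner_form fmorphV /= rmorph_nat; field. Qed.

Lemma werner_form_ge0 t X Y U V : 0 <= t <= 2^-1 ->
  0 <= werner_form 2^-1 X Y U V -> 0 <= werner_form t X Y U V.
Proof.
move=> /andP[t_ge0 t_le_half] half_ge0.
have := sqr_norm_mxtrace_le_tens2 X Y U V.
move: half_ge0; rewrite /werner_form.
set a := fnorm2 _; set b := fnorm2 _ + fnorm2 _; set c := `|_| ^+ 2 => half_ge0 c_le.
have -> : a - t%:C * b + t%:C ^+ 2 * c = (2 * t)%:C * (a - 2^-1%:C * b + 2^-1%:C ^+ 2 * c)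
    + (1 - 2 * t)%:C * (2^-1 * (2 * a - c) + 2^-1 * (1 - t)%:C * c).
  by rewrite fmorphV /= !rmorphB !rmorphM /= !rmorph_nat rmorph1; field.
have c_ge0 : 0 <= c by rewrite exprn_ge0.
have realc_ge0 (r : R) : 0 <= r -> 0 <= r%:C by rewrite ler0c.
apply: addr_ge0; apply: mulr_ge0 => //; [apply: realc_ge0; lra | apply: realc_ge0; lra |].
apply: addr_ge0; apply: mulr_ge0; rewrite ?invr_ge0 ?ler0n ?subr_ge0 //.
by apply: mulr_ge0; rewrite ?invr_ge0 ?ler0n //; apply: realc_ge0; lra.
Qed.

End Werner.

Theorem proposition3p2 (R : realType) (d : nat) :
  (3 <= d)%N ->
  ((forall t : R, (d%:R)^-1 < t -> t <= 2^-1 -> ~ two_distillable (werner d t))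
   <->
   (forall X Y U V : 'M[R[i]]_d,
      0 <= fnorm2 (X *t U + Y *t V)
           - 2^-1 * fnorm2 (X^T *m U + Y^T *m V)
           - 2^-1 * fnorm2 (U *m X^T + V *m Y^T)
           + 4^-1 * `|\tr (X^T *m U + Y^T *m V)| ^+ 2)).
Proof.
move=> d_ge3; have d_gt0 : (0 < d)%N by apply: leq_trans d_ge3.
split=> [undistillable X Y U V | form_ge0 t t_gt t_le /two_distillable_werner].
  have inv_d_lt_half : (d%:R : R)^-1 < 2^-1 by rewrite ltf_pV2 ?posrE ?ltr0n ?ltr_nat.
  rewrite -werner_form_half real_leNgt ?werner_form_real //; apply/negP => neg.
  apply: (undistillable _ inv_d_lt_half (lexx _)).
  by apply/two_distillable_werner; exists X, Y, U, V.
have t_ge0 : 0 <= t by apply/ltW/(le_lt_trans _ t_gt); rewrite invr_ge0 ler0n.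
move=> [X [Y [U [V]]]]; apply/negP; rewrite -real_leNgt ?real0 ?werner_form_real //.
by apply: werner_form_ge0; rewrite ?t_ge0 ?t_le // werner_form_half form_ge0.
Qed.
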